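(* Let $(A,\cdot,\circ)$ be a skew brace such that $A = B\cdot C$ or $A = B\circ C$ for some sub-skew braces $B$ and $C$ satisfying both of the following: (1) $B$ and $C$ are trivial skew braces; (2) $B$ and $C$ are both left ideals and right ideals in the opposite skew brace $A^{\mathrm{op}}$. Then $A' = A*A$ is a trivial skew brace, i.e. $A$ is meta-trivial (equivalently $A'*A' = 1$).
   Context: A skew brace is a set $A$ with two group operations $\cdot$ (often written by juxtaposition) and $\circ$ such that $a\circ(bc) = (a\circ b)\,a^{-1}\,(a\circ c)$ for all $a,b,c\in A$. The two groups have the same identity $1$; $a^{-1}$ denotes the inverse of $a$ in $(A,\cdot)$ and $\overline{a}$ its inverse in $(A,\circ)$. Define $a*b = a^{-1}(a\circ b)b^{-1}$. For subsets $X,Y\subseteq A$, $X*Y$ denotes the subgroup of $(A,\cdot)$ generated by all $x*y$ with $x\in X$, $y\in Y$. A sub-skew brace is a subset that is a subgroup of both $(A,\cdot)$ and $(A,\circ)$. A skew brace (or sub-skew brace) $B$ is trivial if $a\circ b = ab$ for all $a,b\in B$. $A'=A*A$ (it is a sub-skew brace, in fact an ideal); $A$ is meta-trivial if $A'$ is a trivial skew brace. The opposite skew brace $A^{\mathrm{op}}$ is the set $A$ with operations $a\cdot^{\mathrm{op}} b = ba$ and the same $\circ$. Define $\lambda^{\mathrm{op}}_a(b) = (a\circ b)a^{-1}$. A subgroup $I$ of $(A,\cdot)$ is a left ideal in $A^{\mathrm{op}}$ iff $\lambda^{\mathrm{op}}_a(x)\in I$ for all $a\in A$, $x\in I$, and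 a right ideal in $A^{\mathrm{op}}$ iff $a^{-1}\lambda^{\mathrm{op}}_x(a)\in I$ for all $x\in I$, $a\in A$. *)

Record skew_brace := SkewBrace {
  sb_car :> Type;
  sb_mul : sb_car -> sb_car -> sb_car;
  sb_one : sb_car;
  sb_inv : sb_car -> sb_car;
  sb_circ : sb_car -> sb_car -> sb_car;
  sb_cinv : sb_car -> sb_car;
  sb_mulA : forall a b c, sb_mul a (sb_mul b c) = sb_mul (sb_mul a b) c;
  sb_mul1l : forall a, sb_mul sb_one a = a;
  sb_mul1r : forall a, sb_mul a sb_one = a;
  sb_mulVl : forall a, sb_mul (sb_inv a) a = sb_one;
  sb_mulVr : forall a, sb_mul a (sb_inv a) = sb_one;
  sb_circA : forall a b c, sb_circ a (sb_circ b c) = sb_circ (sb_circ a b) c;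
  sb_circ1l : forall a, sb_circ sb_one a = a;
  sb_circ1r : forall a, sb_circ a sb_one = a;
  sb_circVl : forall a, sb_circ (sb_cinv a) a = sb_one;
  sb_circVr : forall a, sb_circ a (sb_cinv a) = sb_one;
  sb_compat : forall a b c,
    sb_circ a (sb_mul b c) = sb_mul (sb_mul (sb_circ a b) (sb_inv a)) (sb_circ a c)
}.

Arguments sb_mul {s}.
Arguments sb_one {s}.
Arguments sb_inv {s}.
Arguments sb_circ {s}.
Arguments sb_cinv {s}.

Section Defs.
Variable A : skew_brace.

Definition star (a b : A) : A :=
  sb_mul (sb_mul (sb_inv a) (sb_circ a b)) (sb_inv b).

Definition is_mul_subgroup (P : A -> Prop) : Prop :=
  P sb_one /\ (forall x y, P x -> P y -> P (sb_mul x y)) /\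
  (forall x, P x -> P (sb_inv x)).

Definition is_circ_subgroup (P : A -> Prop) : Prop :=
  P sb_one /\ (forall x y, P x -> P y -> P (sb_circ x y)) /\
  (forall x, P x -> P (sb_cinv x)).

Definition mul_gen (S : A -> Prop) (x : A) : Prop :=
  forall P, is_mul_subgroup P -> (forall y, S y -> P y) -> P x.

Definition star_set (X Y : A -> Prop) : A -> Prop :=
  mul_gen (fun z => exists x y, X x /\ Y y /\ z = star x y).

Definition derived : A -> Prop := star_set (fun _ => True) (fun _ => True).

Definition is_sub_skew_brace (B : A -> Prop) : Prop :=
  is_mul_subgroup B /\ is_circ_subgroup B.

Definition is_trivial_on (B : A -> Prop) : Prop :=
  forall a b, B a -> B b -> sb_circ a b = sb_mul a b.

Definition lambda_op (a b : A) : A := sb_mul (sb_circ a b) (sb_inv a).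

Definition is_left_ideal_op (I : A -> Prop) : Prop :=
  is_mul_subgroup I /\ forall a x, I x -> I (lambda_op a x).

Definition is_right_ideal_op (I : A -> Prop) : Prop :=
  is_mul_subgroup I /\ forall x a, I x -> I (sb_mul (sb_inv a) (lambda_op x a)).

Definition is_mul_product (B C : A -> Prop) : Prop :=
  forall x : A, exists b c, B b /\ C c /\ x = sb_mul b c.

Definition is_circ_product (B C : A -> Prop) : Prop :=
  forall x : A, exists b c, B b /\ C c /\ x = sb_circ b c.

Definition meta_trivial : Prop := is_trivial_on derived.

End Defs.

From Pilot Require Import Defs.

(* Write λ_a(b) = a⁻¹(a∘b); a ↦ λ_a is an action of (A,∘) on (A,·) by
   automorphisms, a∘b = a·λ_a(b) and a*b = λ_a(b)b⁻¹, so A' is a trivial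
   skew brace iff λ_u(v) = v for all u, v ∈ A'. *)

Section SkewBraceAlgebra.
Variable A : skew_brace.

Local Notation "a · b" := (@sb_mul A a b) (at level 40, left associativity).
Local Notation "a ∘ b" := (@sb_circ A a b) (at level 40, left associativity).
Local Notation inv := (@sb_inv A).
Local Notation ci := (@sb_cinv A).
Local Notation one := (@sb_one A).
Local Notation ell := (lambda_op A).
Local Notation star := (star A).
Local Notation derived := (derived A).

Lemma mulA (a b c : A) : a · (b · c) = a · b · c. Proof. apply sb_mulA. Qed.
Lemma mul1l (a : A) : one · a = a. Proof. apply sb_mul1l. Qed.
Lemma mul1r (a : A) : a · one = a. Proof. apply sb_mul1r. Qed.
Lemma mulVl (a : A) : inv a · a = one. Proof. apply sb_mulVl. Qed.
Lemma mulVr (a : A) : a · inv a = one. Proof. apply sb_mulVr. Qed.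
Lemma mulVlA (x a : A) : x · inv a · a = x.
Proof. rewrite <- mulA, mulVl, mul1r. reflexivity. Qed.
Lemma mulVrA (x a : A) : x · a · inv a = x.
Proof. rewrite <- mulA, mulVr, mul1r. reflexivity. Qed.

Lemma inv_uniq (a b : A) : a · b = one -> b = inv a.
Proof. intro H. rewrite <- (mul1l b), <- (mulVl a), <- mulA, H, mul1r. reflexivity. Qed.
Lemma inv_mul (a b : A) : inv (a · b) = inv b · inv a.
Proof.
  symmetry. apply inv_uniq.
  rewrite mulA, <- (mulA a b (inv b)), mulVr, mul1r, mulVr. reflexivity.
Qed.
Lemma inv_inv (a : A) : inv (inv a) = a.
Proof. symmetry. apply inv_uniq, mulVl. Qed.
Lemma inv_one : inv one = one.
Proof. symmetry. apply inv_uniq, mul1l. Qed.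

Ltac group_norm :=
  repeat (first [ rewrite mulA | rewrite inv_mul | rewrite inv_inv | rewrite inv_one
                | rewrite mul1l | rewrite mul1r | rewrite mulVl | rewrite mulVr
                | rewrite mulVlA | rewrite mulVrA ]).

Lemma circA (a b c : A) : a ∘ (b ∘ c) = a ∘ b ∘ c. Proof. apply sb_circA. Qed.
Lemma circ1l (a : A) : one ∘ a = a. Proof. apply sb_circ1l. Qed.
Lemma circ1r (a : A) : a ∘ one = a. Proof. apply sb_circ1r. Qed.
Lemma circVl (a : A) : ci a ∘ a = one. Proof. apply sb_circVl. Qed.
Lemma circVr (a : A) : a ∘ ci a = one. Proof. apply sb_circVr. Qed.
Lemma cinv_uniq (a b : A) : a ∘ b = one -> b = ci a.
Proof. intro H. rewrite <- (circ1l b), <- (circVl a), <- circA, H, circ1r. reflexivity. Qed.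
Lemma cinv_circ (a b : A) : ci (a ∘ b) = ci b ∘ ci a.
Proof.
  symmetry. apply cinv_uniq.
  rewrite circA, <- (circA a b (ci b)), circVr, circ1r, circVr. reflexivity.
Qed.
Lemma compat (a b c : A) : a ∘ (b · c) = (a ∘ b) · inv a · (a ∘ c).
Proof. apply sb_compat. Qed.

Definition lam (a b : A) : A := inv a · (a ∘ b).

Lemma lam_def (a b : A) : a ∘ b = a · lam a b.
Proof. unfold lam. group_norm. reflexivity. Qed.
Lemma lam_mul (a b c : A) : lam a (b · c) = lam a b · lam a c.
Proof. unfold lam. rewrite compat. group_norm. reflexivity. Qed.
Lemma lam_one (a : A) : lam a one = one.
Proof. unfold lam. rewrite circ1r. apply mulVl. Qed.
Lemma lam_inv (a b : A) : lam a (inv b) = inv (lam a b).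
Proof. apply inv_uniq. rewrite <- lam_mul, mulVr. apply lam_one. Qed.
Lemma lam_circ (a b c : A) : lam (a ∘ b) c = lam a (lam b c).
Proof.
  unfold lam at 1. rewrite <- circA, (lam_def b c), compat, mulA.
  rewrite (mulA (inv (a ∘ b)) (a ∘ b)), mulVl, mul1l. reflexivity.
Qed.
Lemma lam1 (b : A) : lam one b = b.
Proof. unfold lam. rewrite circ1l, inv_one, mul1l. reflexivity. Qed.
Lemma lam_cinv_l (a b : A) : lam (ci a) (lam a b) = b.
Proof. rewrite <- lam_circ, circVl. apply lam1. Qed.
Lemma lam_cinv_r (a b : A) : lam a (lam (ci a) b) = b.
Proof. rewrite <- lam_circ, circVr. apply lam1. Qed.
Lemma mul_as_circ (a b : A) : a · b = a ∘ lam (ci a) b.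
Proof. rewrite lam_def, lam_cinv_r. reflexivity. Qed.

Lemma ell_def (a b : A) : a ∘ b = ell a b · a.
Proof. unfold lambda_op. group_norm. reflexivity. Qed.
Lemma ell_lam (a b : A) : ell a b = a · lam a b · inv a.
Proof. unfold lambda_op. rewrite lam_def. reflexivity. Qed.
Lemma ell_mul (a b c : A) : ell a (b · c) = ell a b · ell a c.
Proof. rewrite !ell_lam, lam_mul. group_norm. reflexivity. Qed.
Lemma ell_one (a : A) : ell a one = one.
Proof. rewrite ell_lam, lam_one. group_norm. reflexivity. Qed.
Lemma ell_inv (a b : A) : ell a (inv b) = inv (ell a b).
Proof. apply inv_uniq. rewrite <- ell_mul, mulVr. apply ell_one. Qed.
Lemma ell_circ (a b c : A) : ell (a ∘ b) c = ell a (ell b c).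
Proof.
  unfold lambda_op at 1. rewrite <- circA, (ell_def b c), compat.
  group_norm. reflexivity.
Qed.
Lemma ell1 (b : A) : ell one b = b.
Proof. unfold lambda_op. rewrite circ1l, inv_one, mul1r. reflexivity. Qed.
Lemma ell_cinv_r (a b : A) : ell a (ell (ci a) b) = b.
Proof. rewrite <- ell_circ, circVr. apply ell1. Qed.
Lemma mul_as_circ_r (p a : A) : p · a = a ∘ ell (ci a) p.
Proof. rewrite ell_def, ell_cinv_r. reflexivity. Qed.
Lemma circ_conj (a b : A) : a ∘ b ∘ ci a = ell a (ell b (ci a)) · ell a b · a.
Proof. rewrite (ell_def (a ∘ b)), ell_circ, ell_def. group_norm. reflexivity. Qed.

Lemma star_lam (a b : A) : star a b = lam a b · inv b.
Proof. reflexivity. Qed.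
Lemma lam_star_eq (a b : A) : lam a b = star a b · b.
Proof. rewrite star_lam. group_norm. reflexivity. Qed.
Lemma star_mul_r (a b c : A) : star a (b · c) = star a b · b · star a c · inv b.
Proof. rewrite !star_lam, lam_mul. group_norm. reflexivity. Qed.
Lemma star_circ_l (a b c : A) : star (a ∘ b) c = lam a (star b c) · star a c.
Proof. rewrite !star_lam, lam_circ, lam_mul, lam_inv. group_norm. reflexivity. Qed.
Lemma lam_star (a b c : A) : lam a (star b c) = star (a ∘ b ∘ ci a) (lam a c).
Proof. rewrite !star_lam, lam_mul, lam_inv, !lam_circ, lam_cinv_l. reflexivity. Qed.

Lemma mul_gen_subgroup (S : A -> Prop) : is_mul_subgroup A (mul_gen A S).
Proof.
  split; [|split].
  - intros P [H1 _] _. exact H1.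
  - intros x y Hx Hy P HP HS. destruct HP as [H1 [H2 H3]].
    apply H2; [apply Hx | apply Hy]; repeat split; assumption.
  - intros x Hx P HP HS. destruct HP as [H1 [H2 H3]].
    apply H3, Hx; repeat split; assumption.
Qed.
Lemma mul_gen_incl (S : A -> Prop) x : S x -> mul_gen A S x.
Proof. intros Hx P _ HS. apply HS, Hx. Qed.
Lemma mul_gen_ind (S P : A -> Prop) x :
  is_mul_subgroup A P -> (forall y, S y -> P y) -> mul_gen A S x -> P x.
Proof. intros HP HS Hx. apply Hx; assumption. Qed.

Lemma mul_product_swap (R1 R2 : A -> Prop) :
  is_mul_subgroup A R1 -> is_mul_subgroup A R2 ->
  is_mul_product A R1 R2 -> is_mul_product A R2 R1.
Proof.
  intros (_ & _ & H1) (_ & _ & H2) Hd n.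
  destruct (Hd (inv n)) as (p & q & Hp & Hq & Heq).
  exists (inv q), (inv p). split; [auto | split; [auto |]].
  rewrite <- inv_mul, <- Heq, inv_inv. reflexivity.
Qed.

(* A' is invariant under every λ_g, since λ_g(a*b) = (g∘a∘ḡ)*λ_g(b). *)
Lemma derived_lam g v : derived v -> derived (lam g v).
Proof.
  unfold derived, star_set.
  set (T := fun z : A => exists x y : A, True /\ True /\ z = star x y).
  destruct (mul_gen_subgroup T) as (T1 & Tmul & Tinv).
  apply (mul_gen_ind T (fun v => mul_gen A T (lam g v))).
  - split; [|split].
    + rewrite lam_one. exact T1.
    + intros x y Hx Hy. rewrite lam_mul. apply Tmul; assumption.
    + intros x Hx. rewrite lam_inv. apply Tinv; assumption.
  - intros y (a & b & _ & _ & ->). rewrite lam_star. apply mul_gen_incl.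
    exists (g ∘ a ∘ ci g), (lam g b). auto.
Qed.

(* If a ↦ λ_a|A' is a homomorphism on (A,·), then every generator
   a⁻¹(a∘b)b⁻¹ of A' acts as λ_a⁻¹ λ_a λ_b λ_b⁻¹ = id, so A' is trivial. *)
Lemma meta_trivial_of_lam_hom :
  (forall p q v, derived v -> lam (p · q) v = lam p (lam q v)) -> meta_trivial A.
Proof.
  intros Hhom u v Hu Hv. rewrite lam_def.
  enough (Hfix : lam u v = v) by (rewrite Hfix; reflexivity).
  revert v Hv. unfold derived, star_set in Hu.
  refine (mul_gen_ind _ (fun u => forall v, derived v -> lam u v = v) u _ _ Hu).
  - split; [|split].
    + intros w _. apply lam1.
    + intros x y Hx Hy w Hw. rewrite Hhom, Hy; auto.
    + intros x Hx w Hw. transitivity (lam (inv x) (lam x w)); [rewrite (Hx w Hw); reflexivity|].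
      rewrite <- Hhom, mulVl; auto. apply lam1.
  - intros y (a & b & _ & _ & ->) w Hw.
    assert (Hw' : derived (lam (inv b) w)) by (apply derived_lam; assumption).
    unfold Defs.star. rewrite (Hhom _ (inv b) w Hw), (Hhom _ (a ∘ b) _ Hw'), lam_circ.
    rewrite <- (Hhom b (inv b) w Hw), mulVr, lam1.
    rewrite <- (Hhom (inv a) a w Hw), mulVl. apply lam1.
Qed.

(* Since p·q = p ∘ λ_{p̄}(q), the homomorphism property follows once
   λ_{λ_g(m)} and λ_m agree on A' for all g, m. *)
Lemma lam_hom_of_shift :
  (forall g m v, derived v -> lam (lam g m) v = lam m v) ->
  forall p q v, derived v -> lam (p · q) v = lam p (lam q v).
Proof. intros Hshift p q v Hv. rewrite (mul_as_circ p q), lam_circ, Hshift; auto. Qed.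

Section Closure.
Context {R : A -> Prop} (HR : is_sub_skew_brace A R).

Lemma sub_one : R one. Proof. apply HR. Qed.
Lemma sub_mul x y : R x -> R y -> R (x · y). Proof. apply HR. Qed.
Lemma sub_inv x : R x -> R (inv x). Proof. apply HR. Qed.
Lemma sub_circ x y : R x -> R y -> R (x ∘ y). Proof. apply HR. Qed.
Lemma sub_cinv x : R x -> R (ci x). Proof. apply HR. Qed.
End Closure.

Lemma left_ideal_op_ell (I : A -> Prop) a x :
  is_left_ideal_op A I -> I x -> I (ell a x).
Proof. intros [_ H]. apply H. Qed.
Lemma right_ideal_op_ell (I : A -> Prop) x a :
  is_right_ideal_op A I -> I x -> I (inv a · ell x a).
Proof. intros [_ H]. apply H. Qed.

Section TrivialSub.
Context {R : A -> Prop} (HRt : is_trivial_on A R).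

Lemma lam_triv x y : R x -> R y -> lam x y = y.
Proof. intros Hx Hy. unfold lam. rewrite HRt; auto. group_norm. reflexivity. Qed.
Lemma ell_triv x y : R x -> R y -> ell x y = x · y · inv x.
Proof. intros Hx Hy. unfold lambda_op. rewrite HRt; auto. Qed.
Lemma star_triv x y : R x -> R y -> star x y = one.
Proof. intros Hx Hy. rewrite star_lam, lam_triv; auto. apply mulVr. Qed.
Lemma cinv_triv (HR : is_sub_skew_brace A R) x : R x -> ci x = inv x.
Proof.
  intro Hx. symmetry. apply cinv_uniq.
  rewrite HRt; [apply mulVr | exact Hx | exact (sub_inv HR x Hx)].
Qed.
End TrivialSub.

(* The hypotheses of the theorem, in the normalised form A = P·Q. *)
Record op_ideal_factorisation (P Q : A -> Prop) : Prop := {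
  fac_subP : is_sub_skew_brace A P;
  fac_subQ : is_sub_skew_brace A Q;
  fac_trivP : is_trivial_on A P;
  fac_trivQ : is_trivial_on A Q;
  fac_leftP : is_left_ideal_op A P;
  fac_rightP : is_right_ideal_op A P;
  fac_leftQ : is_left_ideal_op A Q;
  fac_rightQ : is_right_ideal_op A Q;
  fac_prod : is_mul_product A P Q }.

Lemma factorisation_swap {P Q : A -> Prop} :
  op_ideal_factorisation P Q -> op_ideal_factorisation Q P.
Proof.
  intros [HPs HQs ? ? ? ? ? ? HPQ]. split; try assumption.
  apply mul_product_swap; [apply HPs | apply HQs | exact HPQ].
Qed.

Section Factorisation.
Context {P Q : A -> Prop} (HF : op_ideal_factorisation P Q).

Let HPs := fac_subP _ _ HF.
Let HQs := fac_subQ _ _ HF.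
Let HPt := fac_trivP _ _ HF.
Let HQt := fac_trivQ _ _ HF.
Let HPl := fac_leftP _ _ HF.
Let HPr := fac_rightP _ _ HF.
Let HQl := fac_leftQ _ _ HF.
Let HQr := fac_rightQ _ _ HF.

Local Hint Extern 1 => simple eapply sub_one : core.
Local Hint Extern 2 => simple eapply sub_mul : core.
Local Hint Extern 2 => simple eapply sub_inv : core.
Local Hint Extern 2 => simple eapply sub_circ : core.
Local Hint Extern 2 => simple eapply sub_cinv : core.
Local Hint Extern 2 => simple eapply left_ideal_op_ell : core.
Local Hint Extern 2 => simple eapply right_ideal_op_ell : core.

Lemma factor_PQ n : exists p q, P p /\ Q q /\ n = p · q.
Proof. apply (fac_prod _ _ HF). Qed.
Lemma factor_QP n : exists q p, Q q /\ P p /\ n = q · p.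
Proof. apply (fac_prod _ _ (factorisation_swap HF)). Qed.
(* q·p = p ∘ λ^op_{p̄}(q), so also A = P∘Q. *)
Lemma factor_circ n : exists p q, P p /\ Q q /\ n = p ∘ q.
Proof.
  destruct (factor_QP n) as (q & p & Hq & Hp & ->).
  exists p, (ell (ci p) q). split; [|split]; auto. apply mul_as_circ_r.
Qed.

(* E = P ∩ Q is a normal subgroup of (A,·) stable under λ^op: conjugation
   by q ∈ Q is λ^op_q, and likewise for P, while A = P·Q. *)
Definition E (z : A) : Prop := P z /\ Q z.

Lemma E_one : E one. Proof. split; auto. Qed.
Lemma E_mul x y : E x -> E y -> E (x · y).
Proof. intros [] []; split; auto. Qed.
Lemma E_inv x : E x -> E (inv x).
Proof. intros []; split; auto. Qed.
Lemma E_ell a e : E e -> E (ell a e).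
Proof. intros []; split; auto. Qed.
Lemma E_conj n e : E e -> E (n · e · inv n).
Proof.
  intro He. destruct (factor_PQ n) as (p & q & Hp & Hq & ->).
  replace (p · q · e · inv (p · q)) with (p · (q · e · inv q) · inv p) by (group_norm; reflexivity).
  assert (Hqe : E (q · e · inv q)).
  { rewrite <- (ell_triv HQt q e Hq (proj2 He)). apply E_ell, He. }
  rewrite <- (ell_triv HPt p _ Hp (proj1 Hqe)). apply E_ell, Hqe.
Qed.

(* λ_e is the identity for e ∈ E, as it fixes both factors of A = P·Q. *)
Lemma lam_E e n : E e -> lam e n = n.
Proof.
  intros [HeP HeQ]. destruct (factor_PQ n) as (p & q & Hp & Hq & ->).
  rewrite lam_mul, (lam_triv HPt), (lam_triv HQt); auto.
Qed.

Definition cong (a b : A) : Prop := E (inv a · b).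

Lemma cong_refl a : cong a a. Proof. unfold cong. rewrite mulVl. apply E_one. Qed.
Lemma cong_sym a b : cong a b -> cong b a.
Proof.
  unfold cong. intro H. replace (inv b · a) with (inv (inv a · b)) by (group_norm; reflexivity).
  apply E_inv, H.
Qed.
Lemma cong_trans a b c : cong a b -> cong b c -> cong a c.
Proof.
  unfold cong. intros H1 H2.
  replace (inv a · c) with ((inv a · b) · (inv b · c)) by (group_norm; reflexivity).
  apply E_mul; assumption.
Qed.
Lemma cong_mul a a' b b' : cong a a' -> cong b b' -> cong (a · b) (a' · b').
Proof.
  unfold cong. intros H1 H2.
  replace (inv (a · b) · (a' · b')) with ((inv b · (inv a · a') · inv (inv b)) · (inv b · b'))
    by (group_norm; reflexivity).
  apply E_mul; [apply E_conj|]; assumption.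
Qed.
Lemma cong_ell g a b : cong a b -> cong (ell g a) (ell g b).
Proof. unfold cong. intro H. rewrite <- ell_inv, <- ell_mul. apply E_ell, H. Qed.

(* The op-ideal conditions say that λ^op_x (x ∈ P) acts trivially on Q
   modulo E, and symmetrically. *)
Lemma cong_ell_PQ x c : P x -> Q c -> cong c (ell x c).
Proof. intros Hx Hc. split; auto. Qed.
Lemma cong_ell_QP c x : Q c -> P x -> cong x (ell c x).
Proof. intros Hc Hx. split; auto. Qed.

Lemma cong_P_factor c b c' b' : Q c -> P b -> Q c' -> P b' ->
  cong (c · b) (c' · b') -> cong b b'.
Proof.
  unfold cong. intros Hc Hb Hc' Hb' He.
  set (e := inv (c · b) · (c' · b')) in *.
  assert (Hf : E (inv c · c')).
  { split; auto.
    replace (inv c · c') with (b · e · inv b') by (unfold e; group_norm; reflexivity).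
    destruct He. auto. }
  replace (inv b · b') with ((inv b · inv (inv c · c') · inv (inv b)) · e)
    by (unfold e; group_norm; reflexivity).
  apply E_mul; [apply E_conj, E_inv|]; assumption.
Qed.

Lemma cong_circ_conj c y : Q c -> P y -> cong (c ∘ y ∘ ci c) (inv c · y · c).
Proof.
  intros Hc Hy. rewrite circ_conj, (cinv_triv HQt HQs); auto.
  apply cong_mul; [apply cong_mul|].
  - apply cong_trans with (ell c (inv c)).
    + apply cong_ell, cong_sym, cong_ell_PQ; auto.
    + rewrite (ell_triv HQt); auto. group_norm. apply cong_refl.
  - apply cong_sym, cong_ell_QP; auto.
  - apply cong_refl.
Qed.

Lemma cong_ell_circ_conj x c y : P x -> Q c -> P y ->
  cong (ell x (c ∘ y ∘ ci c)) (c ∘ (x · y · inv x) ∘ ci c).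
Proof.
  intros Hx Hc Hy.
  apply cong_trans with (ell x (inv c · y · c)); [apply cong_ell, cong_circ_conj; auto|].
  apply cong_trans with (inv c · (x · y · inv x) · c);
    [|apply cong_sym, cong_circ_conj; auto].
  rewrite !ell_mul, (ell_triv HPt x y); auto.
  apply cong_mul; [apply cong_mul|].
  - apply cong_sym, cong_ell_PQ; auto.
  - apply cong_refl.
  - apply cong_sym, cong_ell_PQ; auto.
Qed.

Lemma star_cong x x' n : P x -> P x' -> cong x x' -> star x n = star x' n.
Proof.
  intros Hx Hx' He.
  replace x' with (x ∘ (inv x · x')) by (rewrite HPt; [group_norm; reflexivity|auto|apply He]).
  rewrite star_circ_l, (star_lam (inv x · x')), (lam_E _ n He), mulVr, lam_one, mul1l.
  reflexivity.
Qed.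

Lemma star_P_reduce x n : P x -> exists c, Q c /\ star x n = star x c.
Proof.
  intro Hx. destruct (factor_QP n) as (c & y & Hc & Hy & ->).
  exists c. split; [assumption|].
  rewrite star_mul_r, (star_triv HPt x y Hx Hy). group_norm. reflexivity.
Qed.

(* λ_{λ_x(c)} = λ_x λ_c λ_{x̄}, since λ_x(c) = x∘c∘h with x·h ∈ E. *)
Lemma lam_lam_PQ x c n : P x -> Q c -> lam (lam x c) n = lam x (lam c (lam (ci x) n)).
Proof.
  intros Hx Hc.
  set (h := ell (ci c) (inv x)).
  assert (Hh : lam x c = x ∘ c ∘ h).
  { unfold lam at 1. rewrite mul_as_circ_r, cinv_circ, ell_circ, (cinv_triv HPt HPs x Hx).
    rewrite (ell_triv HPt (inv x) (inv x)); auto. group_norm. reflexivity. }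
  assert (He : E (x · h)).
  { split; [unfold h; auto|].
    replace (x · h) with (inv (inv x) · ell (ci c) (inv x)) by (unfold h; group_norm; reflexivity).
    auto. }
  assert (Hh2 : h = ci x ∘ (x · h)).
  { rewrite (cinv_triv HPt HPs x Hx), HPt; [group_norm; reflexivity|auto|apply He]. }
  rewrite Hh, Hh2, !lam_circ, (lam_E _ n He). reflexivity.
Qed.

Lemma lam_Q_star c y c0 b c' : Q c -> P y -> Q c0 -> P b -> Q c' ->
  c ∘ y ∘ ci c = b ∘ c' -> lam c (star y c0) = star b c0.
Proof.
  intros Hc Hy Hc0 Hb Hc' Heq.
  rewrite lam_star, Heq, (lam_triv HQt), star_circ_l, (star_triv HQt); auto.
  rewrite lam_one, mul1l. reflexivity.
Qed.

Lemma lam_P_star x y c0 c2 b2 : P x -> P y -> Q c2 -> P b2 ->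
  lam x c0 = c2 · b2 -> lam x (star y c0) = star (x · y · inv x) c2.
Proof.
  intros Hx Hy Hc2 Hb2 Heq.
  rewrite lam_star, Heq, (cinv_triv HPt HPs x Hx), (HPt x y), (HPt (x · y) (inv x)); auto.
  rewrite star_mul_r, (star_triv HPt (x · y · inv x) b2); auto.
  group_norm. reflexivity.
Qed.

Lemma lam_commute_star x c x0 c0 : P x -> Q c -> P x0 -> Q c0 ->
  lam x (lam c (star x0 c0)) = lam c (lam x (star x0 c0)).
Proof.
  intros Hx Hc Hx0 Hc0.
  assert (HX : P (x · x0 · inv x)) by auto.
  destruct (factor_QP (lam x c0)) as (c2 & b2 & Hc2 & Hb2 & E2).
  destruct (factor_circ (c ∘ x0 ∘ ci c)) as (b1 & c1 & Hb1 & Hc1 & E1).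
  destruct (factor_circ (c ∘ (x · x0 · inv x) ∘ ci c)) as (b3 & c3 & Hb3 & Hc3 & E3).
  rewrite (lam_Q_star c x0 c0 b1 c1), (lam_P_star x b1 c0 c2 b2),
    (lam_P_star x x0 c0 c2 b2), (lam_Q_star c (x · x0 · inv x) c2 b3 c3); auto.
  apply star_cong; auto.
  (* Both sides are P-factors of ∘-conjugates of x·x0·x⁻¹ by c, modulo E. *)
  apply (cong_P_factor (ell x (ell b1 c1)) _ (ell b3 c3) _); auto.
  replace (ell x (ell b1 c1) · (x · b1 · inv x)) with (ell x (c ∘ x0 ∘ ci c))
    by (rewrite E1, ell_def, ell_mul, (ell_triv HPt x b1); auto).
  rewrite <- ell_def, <- E3. apply cong_ell_circ_conj; auto.
Qed.

(* If λ_x and λ_c commute on A' for x ∈ P, c ∈ Q, then λ_{λ_x(m)} = λ_m on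
   A' for x ∈ P: write m = x2∘c2 and use lam_lam_PQ. *)
Lemma lam_shift_P
  (Hcomm : forall x c v, P x -> Q c -> derived v -> lam x (lam c v) = lam c (lam x v))
  x m v : P x -> derived v -> lam (lam x m) v = lam m v.
Proof.
  intros Hx Hv. destruct (factor_circ m) as (x2 & c2 & Hx2 & Hc2 & ->).
  set (y := ci x2 ∘ x ∘ x2).
  assert (Hy : P y) by (unfold y; auto).
  assert (Hm : lam x (x2 ∘ c2) = x2 ∘ lam y c2).
  { rewrite (lam_def x2 c2), lam_mul, (lam_triv HPt x x2 Hx Hx2), mul_as_circ.
    unfold y. rewrite <- !lam_circ. reflexivity. }
  rewrite Hm, !lam_circ, lam_lam_PQ, (Hcomm y c2), lam_cinv_r; auto.
  apply derived_lam, Hv.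
Qed.

End Factorisation.

Section MetaTrivial.
Context {B C : A -> Prop} (HF : op_ideal_factorisation B C).

Let HF' := factorisation_swap HF.

Definition cross_stars (z : A) : Prop :=
  (exists x c, B x /\ C c /\ z = star x c) \/ (exists c x, C c /\ B x /\ z = star c x).

(* A' is contained in ⟨B*C ∪ C*B⟩: with a = x∘c one has
   a*b = (x*(c*b))·(c*b)·(x*b), and x*n ∈ x*C, c*n ∈ c*B. *)
Lemma derived_in_cross_stars v : derived v -> mul_gen A cross_stars v.
Proof.
  destruct (mul_gen_subgroup cross_stars) as (_ & Gmul & _).
  assert (HstarB : forall x n, B x -> mul_gen A cross_stars (star x n)).
  { intros x n Hx. destruct (star_P_reduce HF x n Hx) as (c & Hc & ->).
    apply mul_gen_incl. left. eauto. }
  assert (HstarC : forall c n, C c -> mul_gen A cross_stars (star c n)).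
  { intros c n Hc. destruct (star_P_reduce HF' c n Hc) as (x & Hx & ->).
    apply mul_gen_incl. right. eauto. }
  apply mul_gen_ind; [apply mul_gen_subgroup|].
  intros y (a & b & _ & _ & ->).
  destruct (factor_circ HF a) as (x & c & Hx & Hc & ->).
  rewrite star_circ_l, lam_star_eq. auto.
Qed.

Lemma lam_commute_derived x c v : B x -> C c -> derived v ->
  lam x (lam c v) = lam c (lam x v).
Proof.
  intros Hx Hc Hv. apply derived_in_cross_stars in Hv.
  revert Hv. apply (mul_gen_ind _ (fun v => lam x (lam c v) = lam c (lam x v))).
  - split; [|split].
    + rewrite !lam_one. reflexivity.
    + intros y z Hy Hz. rewrite !lam_mul, Hy, Hz. reflexivity.
    + intros y Hy. rewrite !lam_inv, Hy. reflexivity.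
  - intros y [(x0 & c0 & Hx0 & Hc0 & ->) | (c0 & x0 & Hc0 & Hx0 & ->)].
    + apply (lam_commute_star HF); assumption.
    + symmetry. apply (lam_commute_star HF'); assumption.
Qed.

(* λ_{λ_g(m)} = λ_m on A', writing g = x∘c with x ∈ B, c ∈ C. *)
Lemma lam_shift_derived g m v : derived v -> lam (lam g m) v = lam m v.
Proof.
  intro Hv. destruct (factor_circ HF g) as (x & c & Hx & Hc & ->).
  rewrite lam_circ, (lam_shift_P HF); auto using lam_commute_derived.
  apply (lam_shift_P HF'); auto.
  intros c' x' v' Hc' Hx' Hv'. symmetry. apply lam_commute_derived; assumption.
Qed.

End MetaTrivial.

(* Both forms of the factorisation hypothesis give A = B·C: from A = B∘C,
   x∘c = λ^op_x(c)·x shows A = C·B. *)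
Lemma mul_product_of_factorisation (B C : A -> Prop) :
  is_sub_skew_brace A B -> is_sub_skew_brace A C -> is_left_ideal_op A C ->
  is_mul_product A B C \/ is_circ_product A B C -> is_mul_product A B C.
Proof.
  intros HBs HCs HCl [Hm | Hc]; [exact Hm|].
  apply mul_product_swap; [apply HCs | apply HBs |].
  intro n. destruct (Hc n) as (x & c & Hx & Hcc & ->).
  exists (ell x c), x. split; [apply left_ideal_op_ell|split]; auto. apply ell_def.
Qed.

End SkewBraceAlgebra.

Theorem theorem1p5 (A : skew_brace) (B C : A -> Prop) :
  is_sub_skew_brace A B -> is_sub_skew_brace A C ->
  (is_mul_product A B C \/ is_circ_product A B C) ->
  is_trivial_on A B -> is_trivial_on A C ->
  is_left_ideal_op A B -> is_right_ideal_op A B ->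
  is_left_ideal_op A C -> is_right_ideal_op A C ->
  meta_trivial A.
Proof.
  intros HBs HCs Hprod HBt HCt HBl HBr HCl HCr.
  assert (HF : op_ideal_factorisation A B C).
  { split; try assumption. apply mul_product_of_factorisation; assumption. }
  apply meta_trivial_of_lam_hom, lam_hom_of_shift.
  exact (lam_shift_derived A HF).
Qed.
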